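(* Let $\mathcal{DP}^*_1$ be the digraph with vertex set $\{1,2\}$ and edge set $\{(1,1),(1,2),(2,2)\}$. For every positive integer $m$ there is a surjective homomorphism from $(\mathcal{DP}^*_1)^\omega$ to the digraph $(\{1,\dots,m\};\leq)$.
   Context: $(\mathcal{DP}^*_1)^\omega$ is the direct power of countably many copies of $\mathcal{DP}^*_1$: vertices are sequences in $\{1,2\}^\omega$, with an edge from $u$ to $v$ iff $(u_i,v_i)$ is an edge of $\mathcal{DP}^*_1$ for every $i$. The digraph $(\{1,\dots,m\};\leq)$ has an edge from $a$ to $b$ iff $a\leq b$. *)

From mathcomp Require Import all_boot.
Set Implicit Arguments. Unset Strict Implicit. Unset Printing Implicit Defensive.

Definition DP1_vert := {x : nat | (1 <= x <= 2)%N}.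

Definition DP1_edge (a b : DP1_vert) : Prop :=
  (proj1_sig a, proj1_sig b) \in [:: (1,1); (1,2); (2,2)]%N.

Definition DPw_vert := nat -> DP1_vert.
Definition DPw_edge (u v : DPw_vert) : Prop := forall i : nat, DP1_edge (u i) (v i).

Definition chain_vert (m : nat) := {k : nat | (1 <= k <= m)%N}.
Definition chain_edge (m : nat) (a b : chain_vert m) : Prop :=
  (proj1_sig a <= proj1_sig b)%N.

Definition is_hom (m : nat) (f : DPw_vert -> chain_vert m) : Prop :=
  forall u v : DPw_vert, DPw_edge u v -> chain_edge (f u) (f v).

From mathcomp Require Import all_boot.

(* Map u to 1 + (number of 2's among u 0, ..., u (m-2)).  The only edge of
   DP*_1 leaving 2 goes to 2, so along an edge this count can only grow, and
   the sequences starting with k-1 twos followed by ones reach every value k. *)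

Definition dp1_one : DP1_vert := exist _ 1 isT.
Definition dp1_two : DP1_vert := exist _ 2 isT.

Lemma DP1_edge_from_two (a b : DP1_vert) :
  DP1_edge a b -> sval a == 2 -> sval b == 2.
Proof. by rewrite /DP1_edge !inE; case/or3P => /eqP [-> ->]. Qed.

Definition twos (n : nat) (u : DPw_vert) : nat :=
  count (fun i => sval (u i) == 2) (iota 0 n).

Lemma twos_leq n u : twos n u <= n.
Proof. by rewrite -[leqRHS](size_iota 0) count_size. Qed.

Lemma twos_monotone n u v : DPw_edge u v -> twos n u <= twos n v.
Proof. by move=> uv; apply: sub_count => i; apply: DP1_edge_from_two. Qed.

Definition prefix_twos (k : nat) : DPw_vert :=
  fun i => if i < k then dp1_two else dp1_one.

Lemma twos_prefix_twos n k : k <= n -> twos n (prefix_twos k) = k.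
Proof.
move=> le_kn; rewrite /twos (eq_count (a2 := fun i => i < k)).
  by rewrite -size_filter (filter_iota_ltn 0 le_kn) size_iota.
by move=> i; rewrite /prefix_twos; case: (i < k).
Qed.

Section Height.

Variables (m : nat) (hm : 0 < m).

Lemma twos_succ_in_chain u : 1 <= (twos m.-1 u).+1 <= m.
Proof. by rewrite /= -[m in _ <= m](prednK hm) ltnS twos_leq. Qed.

Definition height (u : DPw_vert) : chain_vert m :=
  exist _ (twos m.-1 u).+1 (twos_succ_in_chain u).

Lemma height_hom : is_hom height.
Proof. by move=> u v uv; rewrite /chain_edge /= ltnS twos_monotone. Qed.

Lemma height_surj (y : chain_vert m) : exists u, height u = y.
Proof.
case: y => k k_in; case/andP: (k_in) => k_gt0 le_km.
exists (prefix_twos k.-1); apply: val_inj => /=.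
by rewrite twos_prefix_twos ?prednK // -ltnS prednK // (leq_trans le_km) ?leqSpred.
Qed.

End Height.

Theorem mainTheorem7 (m : nat) (hm : (0 < m)%N) :
  exists f : DPw_vert -> chain_vert m,
    is_hom f /\ (forall y : chain_vert m, exists u : DPw_vert, f u = y).
Proof. by exists (@height m hm); split; [exact: height_hom | exact: height_surj]. Qed.
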